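(* Consider rational $c$ for which $f_c(x)=x^2+c$ has a rational $3$-cycle $\{x_1,x_2,x_3\}$ (elements written in lowest terms). (a) Some $x_i$ has numerator equal to one of $\pm11,\pm17,\pm25$ if and only if $c=-\tfrac{421}{144}$. (b) Some $x_i$ has numerator $\pm19$ if and only if $c\in\{-\tfrac{301}{144},\,-\tfrac{337\cdot673}{360^2}\}$. (c) Some $x_i$ has numerator $\pm23$ if and only if $c\in\{-\tfrac{301}{144},\,-\tfrac{43^2}{24^2}\}$.
   Context: A rational $3$-cycle of $f_c$ is the orbit of a rational point of minimal period $3$. Standing fact: $f_c$ has one iff $c=-A(m,n)/B(m,n)$ with $A(m,n)=m^6+2m^5n+4m^4n^2+8m^3n^3+9m^2n^4+4mn^5+n^6$, $B(m,n)=4m^2n^2(m+n)^2$, for coprime integers $m,n$ with $mn(m+n)\ne0$; the cycle is then $\{\frac{t_1}{2mn(m+n)},\frac{t_2}{2mn(m+n)},-\frac{t_3}{2mn(m+n)}\}$ in lowest terms, with $t_1=m^3+2m^2n+mn^2+n^3$, $t_2=m^3-mn^2-n^3$, $t_3=m^3+2m^2n+3mn^2+n^3$. *)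

From mathcomp Require Import all_boot all_order all_algebra.
Set Implicit Arguments. Unset Strict Implicit. Unset Printing Implicit Defensive.
Import Order.TTheory GRing.Theory Num.Theory.
Local Open Scope ring_scope.

Definition fc (c : rat) (x : rat) : rat := x ^+ 2 + c.

Definition min_period3 (c x : rat) : Prop :=
  iter 3 (fc c) x = x /\ (forall k : nat, (0 < k < 3)%N -> iter k (fc c) x <> x).

Definition orbit3_has_num (c x : rat) (S : seq int) : Prop :=
  numq x \in S \/ numq (fc c x) \in S \/ numq (fc c (fc c x)) \in S.

Definition has_3cycle_with_num (c : rat) (S : seq int) : Prop :=
  exists x : rat, min_period3 c x /\ orbit3_has_num c x S.

(* If x has minimal period 3 under f_c, the pairwise sums t, u, v of consecutive
   points of the cycle satisfy t u v = 1 and 1 + t + t u = 0, so x and c are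
   rational functions of t = x + f_c(x).  Writing t = m/n in lowest terms gives
   x = t1(m,n) / (2mn(m+n)) and c = -A(m,n)/B(m,n); as t1(m,n) is coprime to
   2mn(m+n), the numerator of x is +-t1(m,n), and every point of the cycle has
   this form.  The theorem thus reduces to the Thue equations |t1(m,n)| = K,
   K in {11,17,19,23,25}, solved in the module CubicThue: t1(m,n) is the norm of
   m + n theta^2 in Z[theta], theta^3 = theta + 1; the real embedding moves any
   element of small norm by a unit theta^j into a finite box, enumerated by
   computation, and the remaining exponential equations c1(g theta^j) = 0 are
   solved by Skolem's p-adic method (moduli 59, 7 and 5).  The seven solutions
   with n > 0 give a table of pairs (|t1|, c) from which each part is read off;
   the converse directions are explicit cycles. *)

From Stdlib Require Import ZArith Lia Znumtheory List Bool Reals Lra Psatz.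

Module CubicThue.
Import ListNotations.
Local Open Scope Z_scope.

(* The element c0 + c1 theta + c2 theta^2 of Z[theta]. *)
Record ZT := mkZT { c0 : Z; c1 : Z; c2 : Z }.

Definition addT (x y : ZT) := mkZT (c0 x + c0 y) (c1 x + c1 y) (c2 x + c2 y).
Definition oppT (x : ZT) := mkZT (- c0 x) (- c1 x) (- c2 x).
Definition subT (x y : ZT) := addT x (oppT y).

(* Multiplication, reducing theta^3 = 1 + theta and theta^4 = theta + theta^2. *)
Definition mulT (x y : ZT) :=
  let a := c0 x in let b := c1 x in let c := c2 x in
  let d := c0 y in let e := c1 y in let f := c2 y in
  mkZT (a*d + (b*f + c*e)) (a*e + b*d + (b*f + c*e) + c*f) (a*f + b*e + c*d + c*f).

Definition zeroT := mkZT 0 0 0.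
Definition oneT := mkZT 1 0 0.
Definition cstT (z : Z) := mkZT z 0 0.
Definition theta := mkZT 0 1 0.
Definition thetaInv := mkZT (-1) 0 1.

Infix "+t" := addT (at level 50, left associativity).
Infix "-t" := subT (at level 50, left associativity).
Infix "*t" := mulT (at level 40, left associativity).

Lemma ZT_ext x y : c0 x = c0 y -> c1 x = c1 y -> c2 x = c2 y -> x = y.
Proof. destruct x, y; simpl; intros; subst; reflexivity. Qed.

Lemma ZT_ring : ring_theory zeroT oneT addT mulT subT oppT (@eq ZT).
Proof.
  constructor; intros;
  repeat match goal with x : ZT |- _ => destruct x end;
  apply ZT_ext; unfold subT, addT, oppT, mulT, zeroT, oneT; cbn [c0 c1 c2]; ring.
Qed.
Add Ring ZT_ring : ZT_ring.

Lemma cstT_add a b : cstT (a + b) = cstT a +t cstT b.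
Proof. apply ZT_ext; cbn; ring. Qed.

Lemma cstT_mul a b : cstT (a * b) = cstT a *t cstT b.
Proof. apply ZT_ext; cbn; ring. Qed.

Lemma c1_add x y : c1 (x +t y) = c1 x + c1 y.
Proof. reflexivity. Qed.

Lemma c1_cstT_mul z w : c1 (cstT z *t w) = z * c1 w.
Proof. destruct w; cbn; ring. Qed.

Lemma theta_thetaInv : theta *t thetaInv = oneT.
Proof. apply ZT_ext; reflexivity. Qed.

Fixpoint powT (x : ZT) (n : nat) : ZT :=
  match n with O => oneT | S n => powT x n *t x end.

Definition upow (j : Z) : ZT :=
  if 0 <=? j then powT theta (Z.to_nat j) else powT thetaInv (Z.to_nat (- j)).

Lemma powT_add x n m : powT x (n + m) = powT x n *t powT x m.
Proof.
  induction m; simpl; [rewrite Nat.add_0_r; ring|].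
  rewrite Nat.add_succ_r; simpl; rewrite IHm; ring.
Qed.

Lemma powT_mul x n m : powT x (n * m) = powT (powT x n) m.
Proof.
  induction m; simpl; [rewrite Nat.mul_0_r; reflexivity|].
  rewrite Nat.mul_succ_r, powT_add, IHm; reflexivity.
Qed.

Lemma upow0 : upow 0 = oneT.
Proof. reflexivity. Qed.

Lemma upow_succ j : upow (j + 1) = upow j *t theta.
Proof.
  unfold upow. destruct (Z.leb_spec 0 j).
  - rewrite (proj2 (Z.leb_le 0 (j + 1))) by lia.
    replace (Z.to_nat (j + 1)) with (S (Z.to_nat j)) by lia. reflexivity.
  - destruct (Z.eq_dec j (-1)) as [->|Hj]; [apply ZT_ext; reflexivity|].
    rewrite (proj2 (Z.leb_gt 0 (j + 1))) by lia.
    replace (Z.to_nat (- j)) with (S (Z.to_nat (- (j + 1)))) by lia. simpl.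
    transitivity (powT thetaInv (Z.to_nat (- (j + 1))) *t (theta *t thetaInv)).
    + rewrite theta_thetaInv; ring.
    + ring.
Qed.

Lemma upow_pred j : upow (j - 1) = upow j *t thetaInv.
Proof.
  replace (upow j) with (upow (j - 1 + 1)) by (f_equal; ring).
  rewrite upow_succ. transitivity (upow (j - 1) *t (theta *t thetaInv)).
  - rewrite theta_thetaInv; ring.
  - ring.
Qed.

Lemma upow_add a b : upow (a + b) = upow a *t upow b.
Proof.
  induction b using Z.peano_ind.
  - rewrite Z.add_0_r, upow0. ring.
  - replace (a + Z.succ b) with (a + b + 1) by lia.
    rewrite <- Z.add_1_r, !upow_succ, IHb. ring.
  - replace (a + Z.pred b) with (a + b - 1) by lia.
    rewrite <- Z.sub_1_r, !upow_pred, IHb. ring.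
Qed.

Lemma upow_mul_nat a (n : nat) : upow (a * Z.of_nat n) = powT (upow a) n.
Proof.
  induction n; [rewrite Z.mul_0_r; reflexivity|].
  rewrite Nat2Z.inj_succ, Z.mul_succ_r, upow_add, IHn. reflexivity.
Qed.

Definition congT (p : Z) (x y : ZT) := exists w, x = y +t cstT p *t w.

Lemma congT_refl p x : congT p x x.
Proof. exists zeroT. ring. Qed.

Lemma congT_trans p x y z : congT p x y -> congT p y z -> congT p x z.
Proof. intros [w ->] [v ->]. exists (w +t v). ring. Qed.

Lemma congT_mul p x y x' y' : congT p x y -> congT p x' y' -> congT p (x *t x') (y *t y').
Proof. intros [w ->] [v ->]. exists (w *t y' +t y *t v +t cstT p *t w *t v). ring. Qed.

Lemma congT_c1 p x y : congT p x y -> (p | c1 x - c1 y).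
Proof. intros [w ->]. rewrite c1_add, c1_cstT_mul. exists (c1 w). ring. Qed.

Lemma congT_powT p x n : congT p x oneT -> congT p (powT x n) oneT.
Proof.
  intros H. induction n; [apply congT_refl|]. simpl.
  apply congT_trans with (oneT *t oneT); [now apply congT_mul|].
  replace (oneT *t oneT) with oneT by ring. apply congT_refl.
Qed.

Lemma upow_period_cong L p beta : upow L = oneT +t cstT p *t beta ->
  forall q, congT p (upow (L * q)) oneT.
Proof.
  intros HL q.
  assert (H1 : congT p (upow L) oneT) by (rewrite HL; eexists; reflexivity).
  assert (H2 : congT p (upow (- L)) oneT).
  { assert (E : upow (- L) *t upow L = oneT)
      by (rewrite <- upow_add, Z.add_opp_diag_l; reflexivity).
    exists (oppT (beta *t upow (- L))).
    transitivity (upow (- L) *t upow L -t cstT p *t beta *t upow (- L)).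
    - rewrite HL; ring.
    - rewrite E; ring. }
  destruct (Z_le_gt_dec 0 q).
  - replace q with (Z.of_nat (Z.to_nat q)) by lia.
    rewrite upow_mul_nat. now apply congT_powT.
  - replace (L * q) with (- L * Z.of_nat (Z.to_nat (- q))) by lia.
    rewrite upow_mul_nat. now apply congT_powT.
Qed.

Lemma c1_upow_mod g L p beta j : 0 < L -> upow L = oneT +t cstT p *t beta ->
  (p | c1 (g *t upow j) - c1 (g *t upow (j mod L))).
Proof.
  intros HL HY. apply congT_c1.
  rewrite (Z.div_mod j L) at 1 by lia. rewrite Z.add_comm, upow_add.
  replace (g *t upow (j mod L)) with (g *t (upow (j mod L) *t oneT)) by ring.
  apply congT_mul; [apply congT_refl|].
  apply congT_mul; [apply congT_refl|]. eapply upow_period_cong; exact HY.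
Qed.

Lemma zero_residue_mod g L p beta j : 0 < L -> 0 < p -> upow L = oneT +t cstT p *t beta ->
  c1 (g *t upow j) = 0 -> c1 (g *t upow (j mod L)) mod p = 0.
Proof.
  intros HL Hp HY Hj. apply Z.mod_divide; [lia|].
  destruct (c1_upow_mod g L p beta j HL HY) as [k Hk]. exists (- k). lia.
Qed.

(* Skolem's p-adic method.  The triangular numbers give the quadratic term of
   the binomial expansion (1 + X)^n = 1 + n X + T(n) X^2 + X^3 S. *)
Fixpoint tri (n : nat) : Z := match n with O => 0 | S k => tri k + Z.of_nat k end.

Lemma tri_double n : 2 * tri n = Z.of_nat n * (Z.of_nat n - 1).
Proof. induction n; simpl tri; [reflexivity|]. rewrite Nat2Z.inj_succ. nia. Qed.

Lemma binomial_cubic X n : exists rest, powT (oneT +t X) n =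
  oneT +t cstT (Z.of_nat n) *t X +t cstT (tri n) *t X *t X +t X *t X *t X *t rest.
Proof.
  induction n as [|n [rest IH]].
  - exists zeroT. destruct X; apply ZT_ext; cbn [powT mulT addT cstT oneT zeroT c0 c1 c2 Z.of_nat tri]; ring.
  - exists (cstT (tri n) +t rest +t rest *t X). simpl powT. rewrite IH.
    simpl tri. rewrite Nat2Z.inj_succ, <- Z.add_1_r, !cstT_add.
    replace (cstT 1) with oneT by reflexivity. ring.
Qed.

(* For odd p >= 3 and d >= 1, (1 + p beta)^d = 1 + p^s w with s >= 1 and
   w = c beta (mod p) for some c prime to p: writing d = p^k d' with p not
   dividing d', each factor p raises s by one without changing w mod p. *)
Lemma pow_one_plus_p (p q : Z) (beta : ZT) : p = 2 * q + 1 -> 1 <= q ->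
  forall d : nat, (1 <= d)%nat ->
  exists (s : nat) w c, (1 <= s)%nat /\
    powT (oneT +t cstT p *t beta) d = oneT +t cstT (p ^ Z.of_nat s) *t w /\
    congT p w (cstT c *t beta) /\ ~ (p | c).
Proof.
  intros Hp Hq d. induction d as [d IH] using (well_founded_induction lt_wf).
  intros Hd. set (P := Z.to_nat p).
  assert (HP : Z.of_nat P = p) by (unfold P; lia).
  destruct (Nat.eq_dec (d mod P) 0) as [Hm|Hm].
  - assert (Hdd : d = (d / P * P)%nat).
    { rewrite (Nat.div_mod d P) at 1 by lia. rewrite Hm. lia. }
    assert (H1 : (1 <= d / P)%nat) by (destruct (d / P)%nat eqn:E; lia).
    assert (H2 : (d / P < d)%nat) by (apply Nat.div_lt; lia).
    destruct (IH _ H2 H1) as (s & w & c & Hs & Heq & Hc & Hnd).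
    destruct (binomial_cubic (cstT (p ^ Z.of_nat s) *t w) P) as [rest HS].
    destruct s as [|t]; [lia|].
    set (e := p ^ Z.of_nat t).
    assert (Hps : p ^ Z.of_nat (S t) = p * e)
      by (unfold e; rewrite Nat2Z.inj_succ, Z.pow_succ_r by lia; ring).
    assert (Htri : tri P = p * q) by (pose proof (tri_double P); rewrite HP in *; nia).
    exists (S (S t)),
      (w +t cstT p *t (cstT q *t cstT e *t w *t w +t cstT e *t cstT e *t w *t w *t w *t rest)), c.
    split; [lia|]. split.
    + rewrite Hdd, powT_mul, Heq, HS, HP, Htri, Hps.
      replace (p ^ Z.of_nat (S (S t))) with (p * (p * e))
        by (rewrite Nat2Z.inj_succ, Z.pow_succ_r, <- Hps by lia; ring).
      rewrite !cstT_mul. ring.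
    + split; [|exact Hnd]. eapply congT_trans; [|exact Hc]. eexists; reflexivity.
  - destruct (binomial_cubic (cstT p *t beta) d) as [rest HS].
    exists 1%nat, (cstT (Z.of_nat d) *t beta
      +t cstT p *t (cstT (tri d) *t beta *t beta +t cstT p *t beta *t beta *t beta *t rest)),
      (Z.of_nat d).
    split; [lia|]. split; [|split].
    + rewrite HS. change (Z.of_nat 1) with 1. rewrite Z.pow_1_r. ring.
    + eexists; reflexivity.
    + intros [k Hk]. apply Hm. rewrite <- HP in Hk.
      apply Nat.Lcm0.mod_divide. exists (Z.to_nat k). lia.
Qed.

Lemma skolem_unique (g beta : ZT) p q P r : p = 2 * q + 1 -> 1 <= q -> 0 < P ->
  upow P = oneT +t cstT p *t beta -> Z.gcd p (c1 (g *t upow r *t beta)) = 1 ->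
  forall k1 k2, c1 (g *t upow (r + P * k1)) = 0 -> c1 (g *t upow (r + P * k2)) = 0 ->
  k1 = k2.
Proof.
  intros Hp Hq HP HY Hg.
  assert (Hlt : forall k1 k2, k1 < k2 -> c1 (g *t upow (r + P * k1)) = 0 ->
                 c1 (g *t upow (r + P * k2)) = 0 -> False).
  { intros k1 k2 Hlt Z1 Z2. set (x := g *t upow (r + P * k1)) in *.
    set (d := Z.to_nat (k2 - k1)).
    destruct (pow_one_plus_p p q beta Hp Hq d ltac:(unfold d; lia))
      as (s & w & c & Hs & Heq & Hc & Hnd).
    (* g theta^(r + P k2) = x (1 + p^s w), so p^s c1 (x w) = 0 *)
    assert (E : g *t upow (r + P * k2) = x +t cstT (p ^ Z.of_nat s) *t (x *t w)).
    { replace (r + P * k2) with (r + P * k1 + P * Z.of_nat d) by (unfold d; lia).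
      rewrite upow_add, upow_mul_nat, HY, Heq. unfold x. ring. }
    rewrite E, c1_add, c1_cstT_mul, Z1 in Z2.
    assert (Z3 : c1 (x *t w) = 0).
    { assert (p ^ Z.of_nat s <> 0) by (apply Z.pow_nonzero; lia). nia. }
    (* while x w = c g theta^r beta (mod p) *)
    assert (C : congT p (x *t w) (cstT c *t (g *t upow r *t beta))).
    { replace (cstT c *t (g *t upow r *t beta))
        with (g *t (upow r *t oneT) *t (cstT c *t beta)) by ring.
      apply congT_mul; [|exact Hc]. unfold x. rewrite upow_add.
      apply congT_mul; [apply congT_refl|].
      apply congT_mul; [apply congT_refl|]. eapply upow_period_cong; exact HY. }
    apply congT_c1 in C. rewrite Z3, c1_cstT_mul in C.
    apply Hnd, Z.gauss with (c1 (g *t upow r *t beta)); [|exact Hg].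
    destruct C as [k Hk]. exists (- k). nia. }
  intros k1 k2 Z1 Z2. destruct (Z.lt_trichotomy k1 k2) as [H|[H|H]]; auto.
  - exfalso; eauto.
  - exfalso; eauto.
Qed.

Definition zrange (lo n : Z) : list Z := map (fun i => lo + Z.of_nat i) (seq 0 (Z.to_nat n)).

Lemma in_zrange x lo n : lo <= x < lo + n -> In x (zrange lo n).
Proof.
  intros H. unfold zrange. apply in_map_iff. exists (Z.to_nat (x - lo)).
  split; [lia|]. apply in_seq. lia.
Qed.

(* For each residue r mod P, either (1) p does not divide c1 (g theta^r), so the
   class holds no zero; or (2) a listed zero z = r (mod P) is the unique one by
   skolem_unique; or (3) a second modulus p2 of period L (P | L) shows that
   c1 (g theta^(r + P i)) is never 0 modulo p2. *)
Definition skolem_check (g : ZT) (p P : Z) (beta : ZT) (zs : list Z) (p2 L : Z) : bool :=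
  forallb (fun r =>
     if negb (c1 (g *t upow r) mod p =? 0) then true else
     if existsb (fun z => ((z mod P =? r) && (Z.gcd p (c1 (g *t upow r *t beta)) =? 1)
                          && (c1 (g *t upow z) =? 0))%bool) zs then true else
     forallb (fun i => negb (c1 (g *t upow (r + P * i)) mod p2 =? 0)) (zrange 0 (L / P)))
   (zrange 0 P).

Lemma skolem_check_sound g p q P beta zs p2 L beta2 : p = 2 * q + 1 -> 1 <= q -> 0 < P ->
  upow P = oneT +t cstT p *t beta -> 0 < L -> (P | L) -> 0 < p2 ->
  upow L = oneT +t cstT p2 *t beta2 -> skolem_check g p P beta zs p2 L = true ->
  forall j, c1 (g *t upow j) = 0 -> In j zs.
Proof.
  intros Hp Hq HP HY HL HPL Hp2 HY2 Hc j Hj.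
  unfold skolem_check in Hc. rewrite forallb_forall in Hc.
  set (r := j mod P).
  assert (Hr : 0 <= r < P) by (apply Z.mod_pos_bound; lia).
  specialize (Hc r (in_zrange r 0 P ltac:(lia))).
  destruct (negb (c1 (g *t upow r) mod p =? 0)) eqn:Hc1;
    [|destruct (existsb _ zs) eqn:Hc2].
  -
    exfalso. apply negb_true_iff, Z.eqb_neq in Hc1.
    apply Hc1, (zero_residue_mod g P p beta); [lia|lia|exact HY|exact Hj].
  - (* case (2): j and z are zeros in the same class *)
    apply existsb_exists in Hc2 as (z & Hz & Hzc).
    apply andb_true_iff in Hzc as [Hzc Hz0]. apply andb_true_iff in Hzc as [Hzr Hg].
    apply Z.eqb_eq in Hzr, Hg, Hz0.
    pose proof (Z.div_mod j P ltac:(lia)). pose proof (Z.div_mod z P ltac:(lia)).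
    assert (E : j / P = z / P).
    { apply (skolem_unique g beta p q P r Hp Hq HP HY Hg).
      - replace (r + P * (j / P)) with j by (unfold r; lia). exact Hj.
      - replace (r + P * (z / P)) with z by lia. exact Hz0. }
    replace j with z by (unfold r in *; lia). exact Hz.
  -
    exfalso. rewrite forallb_forall in Hc.
    set (s := j mod L).
    assert (Hs : 0 <= s < L) by (apply Z.mod_pos_bound; lia).
    assert (Hsr : s mod P = r) by (apply Z.mod_mod_divide; exact HPL).
    destruct HPL as [m Hm].
    assert (Hi : In (s / P) (zrange 0 (L / P))).
    { apply in_zrange. rewrite Hm, Z.div_mul by lia. split.
      - apply Z.div_pos; lia.
      - apply Z.div_lt_upper_bound; lia. }
    specialize (Hc _ Hi). apply negb_true_iff, Z.eqb_neq in Hc. apply Hc.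
    replace (r + P * (s / P)) with s by (rewrite <- Hsr; pose proof (Z.div_mod s P); lia).
    now apply (zero_residue_mod g L p2 beta2).
Qed.

(* The norm of y, the determinant of multiplication by y; it is invariant under
   multiplication by the units theta^j. *)
Definition normT (y : ZT) : Z :=
  let a := c0 y in let b := c1 y in let c := c2 y in
  a*((a+c)*(a+c) - (b+c)*b) - c*(b*(a+c) - (b+c)*c) + b*(b*b - (a+c)*c).

Lemma normT_theta y : normT (theta *t y) = normT y.
Proof. destruct y; unfold normT, mulT, theta; cbn [c0 c1 c2]; ring. Qed.

Lemma normT_thetaInv y : normT (thetaInv *t y) = normT y.
Proof. destruct y; unfold normT, mulT, thetaInv; cbn [c0 c1 c2]; ring. Qed.

Lemma normT_upow j y : normT (upow j *t y) = normT y.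
Proof.
  induction j using Z.peano_ind.
  - rewrite upow0. f_equal. ring.
  - rewrite <- Z.add_1_r, upow_succ.
    replace (upow j *t theta *t y) with (theta *t (upow j *t y)) by ring.
    now rewrite normT_theta.
  - rewrite <- Z.sub_1_r, upow_pred.
    replace (upow j *t thetaInv *t y) with (thetaInv *t (upow j *t y)) by ring.
    now rewrite normT_thetaInv.
Qed.

Local Open Scope R_scope.

Lemma scale_into_unit_interval (r a : R) : 1 < r -> 0 < a ->
  exists j : Z, 1 <= powerRZ r j * a < r.
Proof.
  intros Hr Ha.
  assert (Hlr : 0 < ln r) by (rewrite <- ln_1; apply ln_increasing; lra).
  set (k := ln a / ln r).
  exists (- Zfloor k)%Z.
  pose proof (Zfloor_bound k) as [Hf1 Hf2].
  assert (Hk : k * ln r = ln a) by (unfold k; field; lra).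
  set (u := IZR (- Zfloor k) * ln r + ln a).
  assert (Hu : powerRZ r (- Zfloor k) * a = exp u).
  { unfold u. rewrite powerRZ_Rpower by lra. unfold Rpower.
    rewrite exp_plus, exp_ln by lra. reflexivity. }
  assert (Hu0 : 0 <= u < ln r).
  { unfold u. rewrite opp_IZR. split; nra. }
  rewrite Hu. split.
  - rewrite <- exp_0. destruct (Req_dec u 0) as [->|H0]; [lra|].
    left. apply exp_increasing. lra.
  - rewrite <- (exp_ln r) by lra. apply exp_increasing. lra.
Qed.

Section RealEmbedding.
Variable rho : R.
Hypothesis rho_root : rho ^ 3 = rho + 1.
Hypothesis rho_lo : 13247 / 10000 < rho.
Hypothesis rho_hi : rho < 13248 / 10000.

Definition emb (y : ZT) : R := IZR (c0 y) + IZR (c1 y) * rho + IZR (c2 y) * rho ^ 2.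

(* The product of the two complex embeddings of y: the norm is emb y * cof y. *)
Definition cof (y : ZT) : R :=
  let a := IZR (c0 y) in let b := IZR (c1 y) in let c := IZR (c2 y) in
  a*a - rho*a*b + (2 - rho^2)*a*c + (rho^2-1)*b*b - b*c + (rho^2-1)^2*c*c.

Lemma norm_emb_cof y : IZR (normT y) = emb y * cof y.
Proof.
  destruct y as [a b c]. unfold normT, emb, cof; cbn [c0 c1 c2]; cbv zeta.
  repeat rewrite ?plus_IZR, ?mult_IZR, ?minus_IZR, ?opp_IZR.
  set (A := IZR a); set (B := IZR b); set (C := IZR c).
  apply Rminus_diag_uniq.
  transitivity ((rho^3 - rho - 1) * (- C^3 + C^3*rho - C^3*rho^3 + B*C^2 - B*C^2*rho^2
                 - B^2*C*rho - B^3 + 2*A*B*C)); [ring|].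
  rewrite rho_root. ring.
Qed.

(* cof is a positive definite form: 4 cof y is a sum of two squares. *)
Lemma cof_squares y : 4 * cof y - (3 * IZR (c0 y) + 2 * IZR (c2 y) - emb y) ^ 2 =
  (3 * rho ^ 2 - 4) * (IZR (c1 y) - IZR (c2 y) * rho) ^ 2.
Proof.
  destruct y as [a b c]. unfold emb, cof; cbn [c0 c1 c2]; cbv zeta.
  apply Rminus_diag_uniq.
  transitivity ((rho^3 - rho - 1) * (4 * IZR b * IZR c)); [ring|].
  rewrite rho_root. ring.
Qed.

Lemma emb_theta y : emb (theta *t y) = rho * emb y.
Proof.
  destruct y as [a b c]. unfold emb, mulT, theta; cbn [c0 c1 c2].
  repeat rewrite ?plus_IZR, ?mult_IZR, ?minus_IZR, ?opp_IZR.
  apply Rminus_diag_uniq.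
  transitivity (- IZR c * (rho^3 - rho - 1)); [simpl; ring|].
  rewrite rho_root. ring.
Qed.

Lemma emb_thetaInv y : emb (thetaInv *t y) = / rho * emb y.
Proof.
  pose proof (emb_theta (thetaInv *t y)) as E.
  replace (theta *t (thetaInv *t y)) with ((theta *t thetaInv) *t y) in E by ring.
  rewrite theta_thetaInv in E. replace (oneT *t y) with y in E by ring.
  rewrite E. field. lra.
Qed.

Lemma emb_upow j y : emb (upow j *t y) = powerRZ rho j * emb y.
Proof.
  assert (Hr : rho <> 0) by lra.
  revert y. induction j using Z.peano_ind; intros y.
  - rewrite upow0. replace (oneT *t y) with y by ring. simpl. ring.
  - rewrite <- Z.add_1_r, upow_succ, powerRZ_add by exact Hr.
    replace (upow j *t theta *t y) with (upow j *t (theta *t y)) by ring.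
    rewrite IHj, emb_theta. simpl. ring.
  - rewrite <- Z.sub_1_r, upow_pred, <- Z.add_opp_r, powerRZ_add by exact Hr.
    replace (upow j *t thetaInv *t y) with (upow j *t (thetaInv *t y)) by ring.
    rewrite IHj, emb_thetaInv. simpl. field. exact Hr.
Qed.

Lemma cof_bound y : (Z.abs (normT y) <= 25)%Z -> 1 <= Rabs (emb y) -> 0 <= cof y <= 25.
Proof.
  intros HK HL.
  assert (H34 : 0 <= 3 * rho ^ 2 - 4) by (clear - rho_lo; nra).
  assert (HQ0 : 0 <= cof y).
  { pose proof (cof_squares y) as HS.
    pose proof (pow2_ge_0 (3 * IZR (c0 y) + 2 * IZR (c2 y) - emb y)).
    pose proof (pow2_ge_0 (IZR (c1 y) - IZR (c2 y) * rho)). nra. }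
  split; [exact HQ0|].
  assert (HN : Rabs (IZR (normT y)) <= 25)
    by (rewrite <- abs_IZR; replace 25 with (IZR 25) by reflexivity; apply IZR_le; lia).
  rewrite norm_emb_cof, Rabs_mult, (Rabs_right (cof y)) in HN by lra. nra.
Qed.

(* An element of norm at most 25 in absolute value whose real embedding lies in
   [1, rho) has small coordinates: the two squares of cof_squares are at most
   4 cof y <= 100, which bounds the linear forms s and v below, and the three
   coordinates are recovered from emb y, s and v. *)
Lemma small_coordinates y : (Z.abs (normT y) <= 25)%Z -> 1 <= Rabs (emb y) < rho ->
  (-7 <= c0 y <= 7 /\ -15 <= c1 y <= 15 /\ -5 <= c2 y <= 5)%Z.
Proof.
  intros HK HL.
  destruct (cof_bound y HK (proj1 HL)) as [HQ0 HQ]. pose proof (cof_squares y) as HS.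
  set (L := emb y) in *. set (Q := cof y) in *.
  set (a := IZR (c0 y)) in *. set (b := IZR (c1 y)) in *. set (c := IZR (c2 y)) in *.
  assert (HL3 : - 13248 / 10000 <= L <= 13248 / 10000).
  { destruct (Rcase_abs L); [rewrite Rabs_left in HL|rewrite Rabs_right in HL]; lra. }
  assert (H34 : 3 * rho ^ 2 - 4 >= 126/100) by (clear - rho_lo; nra).
  set (s := 3 * a + 2 * c - L) in *. set (v := b - c * rho) in *.
  assert (Hv2 : 0 <= (3 * rho ^ 2 - 4) * v ^ 2) by (apply Rmult_le_pos; [lra|apply pow2_ge_0]).
  assert (Hs2 : 0 <= s ^ 2) by apply pow2_ge_0.
  assert (Hs : -10 <= s <= 10) by (clear - Hs2 HS HQ HQ0 Hv2; nra).
  assert (Hv : -9 <= v <= 9) by (clear - H34 Hv2 HS HQ Hs2; nra).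
  assert (Hid : c * (2 * rho ^ 2 - 2 / 3) = 2 / 3 * L - s / 3 - v * rho)
    by (unfold s, v, L, emb; fold a b c; field).
  assert (Hvr : -9 * (13248 / 10000) <= v * rho <= 9 * (13248 / 10000))
    by (clear - Hv rho_lo rho_hi; nra).
  assert (Hr2 : 2 * rho ^ 2 - 2 / 3 >= 284/100) by (clear - rho_lo; nra).
  assert (Hc : -6 < c < 6) by (clear - Hid Hvr Hr2 HL3 Hs; split; nra).
  assert (Hc2 : (-5 <= c2 y <= 5)%Z)
    by (destruct Hc as [H1 H2]; apply lt_IZR in H1; apply lt_IZR in H2; lia).
  assert (Hc3 : -5 <= c <= 5) by (split; unfold c; apply IZR_le; lia).
  assert (Hcr : -5 * (13248 / 10000) <= c * rho <= 5 * (13248 / 10000))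
    by (clear - Hc3 rho_lo rho_hi; nra).
  assert (Hb : -16 < b < 16) by (unfold v in Hv; lra).
  assert (Ha : -8 < a < 8) by (unfold s in Hs; lra).
  destruct Hb as [Hb1 Hb2], Ha as [Ha1 Ha2].
  apply lt_IZR in Hb1, Hb2, Ha1, Ha2. lia.
Qed.

Lemma emb_normalize y : normT y <> 0%Z -> exists j, 1 <= Rabs (emb (upow j *t y)) < rho.
Proof.
  intros Hy.
  assert (HL : emb y <> 0).
  { intros E. apply Hy, eq_IZR. rewrite norm_emb_cof, E. ring. }
  destruct (scale_into_unit_interval rho (Rabs (emb y))) as [j Hj];
    [lra|now apply Rabs_pos_lt|].
  exists j. rewrite emb_upow, Rabs_mult, (Rabs_right (powerRZ rho j)); [exact Hj|].
  apply Rle_ge, powerRZ_le. lra.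
Qed.

End RealEmbedding.

Lemma real_root_exists : exists rho : R,
  rho ^ 3 = rho + 1 /\ 13247 / 10000 < rho /\ rho < 13248 / 10000.
Proof.
  destruct (IVT (fun x => x ^ 3 - x - 1) (13247 / 10000) (13248 / 10000))
    as [z [[Hz1 Hz2] Hz]]; [apply derivable_continuous; reg|lra|lra|lra|].
  exists z. split; [lra|].
  split; [destruct (Rle_lt_or_eq_dec _ _ Hz1)|destruct (Rle_lt_or_eq_dec _ _ Hz2)];
    try assumption; subst z; lra.
Qed.

Local Open Scope Z_scope.

Lemma reduce_to_box x : 1 <= Z.abs (normT x) <= 25 ->
  exists j y, x = upow j *t y /\ normT y = normT x /\
    -7 <= c0 y <= 7 /\ -15 <= c1 y <= 15 /\ -5 <= c2 y <= 5.
Proof.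
  intros HK. destruct real_root_exists as (rho & Hr & Hlo & Hhi).
  destruct (emb_normalize rho Hr Hlo x) as [j Hj]; [lia|].
  assert (Hn : normT (upow j *t x) = normT x) by apply normT_upow.
  exists (- j), (upow j *t x). split; [|split; [exact Hn|]].
  - transitivity (upow (- j + j) *t x).
    + rewrite Z.add_opp_diag_l, upow0. ring.
    + rewrite upow_add. ring.
  - apply (small_coordinates rho Hr Hlo Hhi); [rewrite Hn; lia|exact Hj].
Qed.

Definition thue_form (m n : Z) := m*m*m + 2*m*m*n + m*n*n + n*n*n.

Lemma normT_thue_form m n : normT (mkZT m 0 n) = thue_form m n.
Proof. unfold normT, thue_form; cbn [c0 c1 c2]; ring. Qed.

Definition thue_rhs := [11; 17; 19; 23; 25].

Definition ZT_eqb (x y : ZT) : bool :=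
  ((c0 x =? c0 y) && (c1 x =? c1 y) && (c2 x =? c2 y))%bool.

Lemma ZT_eqb_eq x y : ZT_eqb x y = true -> x = y.
Proof.
  unfold ZT_eqb. intros H. apply andb_true_iff in H as [H H3].
  apply andb_true_iff in H as [H1 H2]. apply Z.eqb_eq in H1, H2, H3. now apply ZT_ext.
Qed.

(* The periods used by Skolem's method: theta^L = 1 + p beta, with beta
   computed by exact division. *)
Definition unit_quot (L p : Z) : ZT :=
  let x := upow L -t oneT in mkZT (c0 x / p) (c1 x / p) (c2 x / p).

Lemma period_58_59 : upow 58 = oneT +t cstT 59 *t unit_quot 58 59.
Proof. vm_compute. reflexivity. Qed.
Lemma period_1392_7 : upow 1392 = oneT +t cstT 7 *t unit_quot 1392 7.
Proof. vm_compute. reflexivity. Qed.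
Lemma period_24_5 : upow 24 = oneT +t cstT 5 *t unit_quot 24 5.
Proof. vm_compute. reflexivity. Qed.

(* Representatives of the elements of norm +-K, K in thue_rhs, up to units, each
   with the complete list of j such that g theta^j lies in Z + Z theta^2. *)
Definition zero_table : list (ZT * list Z) :=
  [(mkZT 3 0 (-1), [0]); (mkZT 2 (-2) 1, [5]); (mkZT 1 (-3) 1, [-6; 4]);
   (mkZT 4 0 (-3), [0]); (mkZT 2 3 (-4), [5]); (mkZT 5 1 (-3), [4]);
   (mkZT 1 4 (-3), [])].

Ltac certify p q P p2 L Hp HL :=
  apply (skolem_check_sound _ p q P (unit_quot P p) _ p2 L (unit_quot L p2));
  [lia|lia|lia|exact Hp|lia|exists (L / P); reflexivity|lia|exact HL|vm_compute; reflexivity].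

Lemma zero_table_sound g zs j : In (g, zs) zero_table -> c1 (g *t upow j) = 0 -> In j zs.
Proof.
  simpl. intros H.
  repeat destruct H as [H|H]; try contradiction; injection H as <- <-.
  - certify 59 29 58 7 1392 period_58_59 period_1392_7.
  - certify 59 29 58 7 1392 period_58_59 period_1392_7.
  - certify 59 29 58 59 58 period_58_59 period_58_59.
  - certify 59 29 58 59 58 period_58_59 period_58_59.
  - certify 59 29 58 59 58 period_58_59 period_58_59.
  - certify 59 29 58 59 58 period_58_59 period_58_59.
  - certify 5 2 24 5 24 period_24_5 period_24_5.
Qed.

Definition assoc_to_table (y : ZT) : bool :=
  existsb (fun g => existsb (fun e => existsb (fun i => ZT_eqb y (cstT e *t upow i *t g))
    (zrange (-12) 25)) [1; -1]) (map fst zero_table).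

Definition for_all_in_box (P : Z -> Z -> Z -> bool) : bool :=
  forallb (fun a => forallb (fun b => forallb (fun c => P a b c)
    (zrange (-5) 11)) (zrange (-15) 31)) (zrange (-7) 15).

Lemma for_all_in_box_spec P a b c : for_all_in_box P = true ->
  -7 <= a <= 7 -> -15 <= b <= 15 -> -5 <= c <= 5 -> P a b c = true.
Proof.
  unfold for_all_in_box. intros B Ha Hb Hc.
  rewrite forallb_forall in B. specialize (B _ (in_zrange a (-7) 15 ltac:(lia))).
  rewrite forallb_forall in B. specialize (B _ (in_zrange b (-15) 31 ltac:(lia))).
  rewrite forallb_forall in B. exact (B _ (in_zrange c (-5) 11 ltac:(lia))).
Qed.

Definition box_entry_ok (a b c : Z) : bool :=
  let y := mkZT a b c in
  if existsb (Z.eqb (Z.abs (normT y))) thue_rhs then assoc_to_table y else true.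

Lemma box_check : for_all_in_box box_entry_ok = true.
Proof. vm_compute. reflexivity. Qed.

Lemma box_classification y : -7 <= c0 y <= 7 -> -15 <= c1 y <= 15 -> -5 <= c2 y <= 5 ->
  In (Z.abs (normT y)) thue_rhs ->
  exists g zs e i, In (g, zs) zero_table /\ (e = 1 \/ e = -1) /\ y = cstT e *t upow i *t g.
Proof.
  intros Ha Hb Hc HK.
  pose proof (for_all_in_box_spec _ _ _ _ box_check Ha Hb Hc) as B.
  unfold box_entry_ok in B. replace (mkZT (c0 y) (c1 y) (c2 y)) with y in B by now destruct y.
  destruct (existsb _ thue_rhs) eqn:HK'.
  - apply existsb_exists in B as (g & Hg & B). apply in_map_iff in Hg as ([g' zs] & <- & Hg).
    apply existsb_exists in B as (e & He & B). apply existsb_exists in B as (i & _ & B).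
    exists g', zs, e, i. split; [exact Hg|]. split; [|now apply ZT_eqb_eq].
    destruct He as [<-|[<-|[]]]; auto.
  - exfalso. rewrite <- not_true_iff_false in HK'. apply HK', existsb_exists.
    exists (Z.abs (normT y)). split; [exact HK|apply Z.eqb_refl].
Qed.

Definition thue_candidates : list (Z * Z) :=
  flat_map (fun gz => flat_map (fun k => let x := fst gz *t upow k in
    [(c0 x, c2 x); (- c0 x, - c2 x)]) (snd gz)) zero_table.

Definition thue_sols : list (Z * Z) :=
  [(3, -1); (-3, 1); (1, 2); (-1, -2); (-9, 5); (9, -5); (-2, -1); (2, 1);
   (4, -3); (-4, 3); (1, -3); (-1, 3); (-2, 3); (2, -3)].

Lemma thue_candidates_eq : thue_candidates = thue_sols.
Proof. vm_compute. reflexivity. Qed.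

Theorem thue_solutions m n : In (Z.abs (thue_form m n)) thue_rhs -> In (m, n) thue_sols.
Proof.
  intros HK. rewrite <- thue_candidates_eq. set (x := mkZT m 0 n).
  rewrite <- normT_thue_form in HK. fold x in HK.
  destruct (reduce_to_box x) as (j & y & Ex & Hy & H0 & H1 & H2);
    [simpl in HK; lia|].
  rewrite <- Hy in HK.
  destruct (box_classification y H0 H1 H2 HK) as (g & zs & e & i & Hg & He & Ey).
  assert (Ex2 : x = cstT e *t (g *t upow (j + i))) by (rewrite Ex, Ey, upow_add; ring).
  assert (Hk : In (j + i) zs).
  { apply (zero_table_sound g); [exact Hg|].
    assert (Hc1 : c1 x = 0) by reflexivity. rewrite Ex2, c1_cstT_mul in Hc1.
    destruct He; subst e; lia. }
  unfold thue_candidates. apply in_flat_map. exists (g, zs). split; [exact Hg|].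
  apply in_flat_map. exists (j + i). split; [exact Hk|]. cbn [fst]; cbv zeta.
  set (w := g *t upow (j + i)) in *.
  assert (Hm : m = e * c0 w) by (change m with (c0 x); rewrite Ex2; destruct w; cbn; ring).
  assert (Hn : n = e * c2 w) by (change n with (c2 x); rewrite Ex2; destruct w; cbn; ring).
  destruct He as [-> | ->]; [left|right; left]; f_equal; lia.
Qed.

(* For coprime m, n the form is coprime to 2 m n (m + n): it is odd, and it is
   congruent to a cube of a unit modulo each of m, n and m + n. *)
Lemma rel_prime_cube a b : rel_prime a b -> rel_prime a (b * b * b).
Proof. intros H. repeat apply rel_prime_mult; auto. Qed.

Lemma rel_prime_shift a b k : rel_prime a b -> rel_prime a (b + k * a).
Proof.
  intros H. apply Zgcd_1_rel_prime. rewrite Z.gcd_add_mult_diag_r.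
  now apply Zgcd_1_rel_prime.
Qed.

Lemma thue_form_odd m n : rel_prime m n -> Z.odd (thue_form m n) = true.
Proof.
  intros H. destruct (Z.odd m) eqn:Om, (Z.odd n) eqn:On;
    try (unfold thue_form; rewrite !Z.odd_add, !Z.odd_mul, Om, On; reflexivity).
  exfalso. pose proof (Z.div2_odd m) as Em. pose proof (Z.div2_odd n) as En.
  rewrite Om in Em. rewrite On in En. simpl Z.b2z in Em, En.
  destruct H as [_ _ Hg].
  assert (D : (2 | 1)) by (apply Hg; [exists (Z.div2 m)|exists (Z.div2 n)]; lia).
  apply Z.divide_1_r in D. lia.
Qed.

Lemma thue_form_coprime m n : Z.gcd m n = 1 ->
  Z.gcd (thue_form m n) (2 * m * n * (m + n)) = 1.
Proof.
  intros H. apply Zgcd_1_rel_prime in H. apply Zgcd_1_rel_prime.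
  apply rel_prime_mult; [apply rel_prime_mult; [apply rel_prime_mult|]|];
    apply rel_prime_sym.
  - pose proof (Z.div2_odd (thue_form m n)) as E.
    rewrite (thue_form_odd m n H) in E. simpl Z.b2z in E. rewrite E.
    replace (2 * Z.div2 (thue_form m n) + 1) with (1 + Z.div2 (thue_form m n) * 2) by ring.
    apply rel_prime_shift, rel_prime_sym, rel_prime_1.
  - replace (thue_form m n) with (n * n * n + (m + n) * (m + n) * m) by (unfold thue_form; ring).
    apply rel_prime_shift, rel_prime_cube, H.
  - replace (thue_form m n) with (m * m * m + (2 * m * m + m * n + n * n) * n)
      by (unfold thue_form; ring).
    apply rel_prime_shift, rel_prime_cube, rel_prime_sym, H.
  - replace (thue_form m n) with (n * n * n + (m * (m + n)) * (m + n))
      by (unfold thue_form; ring).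
    apply rel_prime_shift, rel_prime_cube, Zgcd_1_rel_prime.
    replace (m + n) with (m + 1 * n) by ring.
    rewrite Z.gcd_comm, Z.gcd_add_mult_diag_r, Z.gcd_comm. now apply Zgcd_1_rel_prime.
Qed.

End CubicThue.

From mathcomp Require Import all_boot all_order all_algebra.
From mathcomp Require Import ring zify.
From mathcomp.zify Require Import ssrZ.
Import Order.TTheory GRing.Theory Num.Theory.
Local Open Scope ring_scope.

(* For a 3-cycle x -> y -> z -> x the
   pairwise sums t = x + y, u = y + z, v = z + x satisfy t u v = 1 (multiply the
   three relations y - z = (x - y) t, ...) and 1 + t + t u = 0 (sum them). *)
Lemma cycle_sum_relations (c x y z : rat) :
  y = x ^+ 2 + c -> z = y ^+ 2 + c -> x = z ^+ 2 + c -> y != x ->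
  (x + y) * (y + z) * (z + x) = 1 /\ 1 + (x + y) + (x + y) * (y + z) = 0.
Proof.
  move=> Ey Ez Ex; rewrite eq_sym -subr_eq0 => hd.
  have E1 : y - z = (x - y) * (x + y) by rewrite {1}Ey Ez; ring.
  have E2 : z - x = (y - z) * (y + z) by rewrite {1}Ez Ex; ring.
  have E3 : x - y = (z - x) * (z + x) by rewrite {1}Ex Ey; ring.
  split; apply: (mulfI hd).
  - by rewrite mulr1 {2}E3 E2 E1; ring.
  - rewrite mulr0 -[RHS](_ : (x - y) + (y - z) + (z - x) = 0); last by ring.
    by rewrite E2 E1; ring.
Qed.

Lemma cycle_param_t (c x : rat) : min_period3 c x -> exists t : rat, t != 0 /\ 1 + t != 0 /\
  x = (t + (1 + t) / t - 1 / (1 + t)) / 2 /\ c = t - x - x ^+ 2.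
Proof.
  case=> /= Hx Hk.
  have hy : fc c x != x by apply/eqP; apply: (Hk 1%N).
  have [] := @cycle_sum_relations c x (fc c x) (fc c (fc c x)) erefl erefl (esym Hx) hy.
  set y := fc c x; set t := x + y; set u := y + _; set v := _ + x => Htuv Hs.
  have ht : t != 0.
    by apply/eqP => t0; move: Htuv; rewrite t0 !mul0r => /eqP; rewrite eq_sym oner_eq0.
  have ht1 : 1 + t != 0.
    apply/eqP => Et; have tu0 : t * u = 0 by rewrite -[t * u]add0r -Et Hs.
    by move: Htuv; rewrite tu0 mul0r => /eqP; rewrite eq_sym oner_eq0.
  have Hu : u = - (1 + t) / t.
    by apply: (mulfI ht); rewrite mulrCA divff // mulr1 -[RHS]add0r -Hs; ring.
  have hu : u != 0 by rewrite Hu mulf_neq0 ?oppr_eq0 ?invr_eq0.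
  have Hv : v = - 1 / (1 + t).
    by apply: (mulfI (mulf_neq0 ht hu)); rewrite Htuv Hu; field; rewrite ht ht1.
  exists t; do 2!split => //; split.
  - have -> : x = (t - u + v) / 2 by rewrite /t /u /v; field.
    by rewrite Hu Hv; field; rewrite ht ht1.
  - by rewrite /t /y /fc; ring.
Qed.

Definition t1 (m n : int) : int := m * m * m + 2 * m * m * n + m * n * n + n * n * n.
Definition cycle_den (m n : int) : int := 2 * m * n * (m + n).
Definition A_form (a b : rat) : rat :=
  a ^+ 6 + 2 * a ^+ 5 * b + 4 * a ^+ 4 * b ^+ 2 + 8 * a ^+ 3 * b ^+ 3
  + 9 * a ^+ 2 * b ^+ 4 + 4 * a * b ^+ 5 + b ^+ 6.
Definition B_form (a b : rat) : rat := 4 * a ^+ 2 * b ^+ 2 * (a + b) ^+ 2.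
Definition c_param (m n : int) : rat := - A_form m%:~R n%:~R / B_form m%:~R n%:~R.

Lemma cycle_param (c x : rat) : min_period3 c x -> exists m n : int,
  0 < n /\ coprimez m n /\ m != 0 /\ m + n != 0 /\
  x = (t1 m n)%:~R / (cycle_den m n)%:~R /\ c = c_param m n.
Proof.
  move=> /cycle_param_t [t [ht [ht1 [Ex Ec]]]].
  exists (numq t), (denq t); set m := numq t; set n := denq t.
  have Et : t = m%:~R / n%:~R by rewrite divq_num_den.
  have hm : m != 0 by rewrite numq_eq0.
  have hN : (n%:~R : rat) != 0 by rewrite intr_eq0 denq_neq0.
  have hmn : m + n != 0.
    apply: contra_neq ht1 => Emn.
    have -> : 1 + t = (m + n)%:~R / n%:~R by rewrite Et; field.
    by rewrite Emn mul0r.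
  have hM : (m%:~R : rat) != 0 by rewrite intr_eq0.
  have hMN : (m%:~R + n%:~R : rat) != 0 by rewrite -rmorphD /= intr_eq0.
  split; first exact: denq_gt0.
  split; first by rewrite /m /n coprimezE coprime_num_den.
  do 2!split => //.
  split; [rewrite Ex | rewrite Ec Ex]; rewrite Et /t1 /cycle_den /c_param /A_form /B_form;
    by field; rewrite hM hN hMN.
Qed.

Lemma t1_coprime (m n : int) : coprimez m n -> coprimez (t1 m n) (cycle_den m n).
Proof.
  have coprimezE_Z (a b : int) :
    coprimez a b = Z.eqb (Z.gcd (Z_of_int a) (Z_of_int b)) 1 by lia.
  rewrite !coprimezE_Z => /Z.eqb_eq H; apply/Z.eqb_eq.
  have -> : Z_of_int (t1 m n) = CubicThue.thue_form (Z_of_int m) (Z_of_int n).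
    by rewrite /t1 /CubicThue.thue_form; lia.
  have -> : Z_of_int (cycle_den m n) = (2 * Z_of_int m * Z_of_int n * (Z_of_int m + Z_of_int n))%Z.
    by rewrite /cycle_den; lia.
  exact: CubicThue.thue_form_coprime.
Qed.

Lemma numq_cycle_point (m n : int) : coprimez m n -> m != 0 -> n != 0 -> m + n != 0 ->
  `|numq ((t1 m n)%:~R / (cycle_den m n)%:~R : rat)| = `|t1 m n|.
Proof.
  move=> cop hm hn hmn.
  rewrite coprimeq_num; last by rewrite -coprimezE; apply: t1_coprime.
  by rewrite normrM normr_sg /cycle_den !mulf_neq0 // mul1r.
Qed.

Lemma min_period3_fc (c x : rat) : min_period3 c x -> min_period3 c (fc c x).
Proof.
  case=> /= H3 Hk; have /= H1 := Hk 1%N erefl.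
  split=> [|[|[|[|k]]]] //=; first by rewrite H3.
  - by move=> _ E; apply: H1; rewrite -{1}H3 E.
  - by move=> _ E; apply: H1; rewrite -{1}E.
Qed.

(* The integral solutions of the Thue equations with n > 0 (the others are their
   negatives, which give the same cycle). *)
Definition thue_pos_sols : seq (int * int) :=
  [:: (-3, 1); (1, 2); (2, 1); (-9, 5); (-4, 3); (-1, 3); (-2, 3)].

Lemma thue_pos (m n : int) : `|t1 m n| \in [:: 11; 17; 19; 23; 25] -> 0 < n ->
  (m, n) \in thue_pos_sols.
Proof.
  move=> HK hn.
  have : In (Z.abs (CubicThue.thue_form (Z_of_int m) (Z_of_int n))) CubicThue.thue_rhs.
    have -> : Z.abs (CubicThue.thue_form (Z_of_int m) (Z_of_int n)) = Z_of_int `|t1 m n|.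
      by rewrite /t1 /CubicThue.thue_form; lia.
    by move: HK; rewrite !inE; repeat case/orP; move/eqP => ->; vm_compute; tauto.
  move: hn => /[swap] /CubicThue.thue_solutions; rewrite /CubicThue.thue_sols; cbn [List.In].
  have Zint_eq (z : Z) (a : int) : z = Z_of_int a -> a = int_of_Z z by move->; rewrite Z_of_intK.
  by do ![case=> [[/Zint_eq -> /Zint_eq ->] // | ]].
Qed.

Definition table (k : int) (c : rat) : Prop :=
     (k = 11 /\ c = - 421 / 144)
  \/ (k = 17 /\ c = - 421 / 144)
  \/ (k = 19 /\ c = - 301 / 144)
  \/ (k = 19 /\ c = - (337 * 673) / 360 ^+ 2)
  \/ (k = 23 /\ c = - 43 ^+ 2 / 24 ^+ 2)
  \/ (k = 23 /\ c = - 301 / 144)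
  \/ (k = 25 /\ c = - 421 / 144).

Lemma thue_pos_table (m n : int) : (m, n) \in thue_pos_sols -> table `|t1 m n| (c_param m n).
Proof.
  rewrite /table /c_param /A_form /B_form !inE => H.
  repeat case/orP: H => [/eqP[-> ->]|H]; last move/eqP: H => [-> ->].
  all: do ?[by left; split; [|field] | right]; by split; [|field].
Qed.

Lemma cycle_table (c : rat) (S : seq int) :
  all (fun k => k \in [:: 11; 17; 19; 23; 25]) [seq `|s| | s <- S] ->
  has_3cycle_with_num c S -> exists2 k, k \in [seq `|s| | s <- S] & table k c.
Proof.
  move=> /allP HS [x [Hx Hnum]].
  have [y [Hy HyS]] : exists y, min_period3 c y /\ numq y \in S.
    case: Hnum => [|[|]] H; [exists x | exists (fc c x) | exists (fc c (fc c x))];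
      by split => //; do ?apply: min_period3_fc.
  have [m [n [hn [cop [hm [hmn [Ey ->]]]]]]] := @cycle_param c y Hy.
  have Hk : `|t1 m n| \in [seq `|s| | s <- S].
    by rewrite -(@numq_cycle_point m n cop hm (lt0r_neq0 hn) hmn) -Ey; apply: map_f.
  by exists `|t1 m n|; last by apply/thue_pos_table/thue_pos/hn; apply: HS.
Qed.

Lemma cycle_witness (c x y z : rat) (S : seq int) :
  fc c x = y -> fc c y = z -> fc c z = x -> y != x -> z != x -> numq x \in S ->
  has_3cycle_with_num c S.
Proof.
  move=> Ey Ez Ex hy hz HS; exists x; split; last by left.
  split=> [|[|[|[|k]]]] //=; first by rewrite Ey Ez Ex.
  - by rewrite Ey; move/eqP: hy.
  - by rewrite Ey Ez; move/eqP: hz.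
Qed.

Theorem theorem8 (c : rat) :
  (has_3cycle_with_num c [:: 11; -11; 17; -17; 25; -25] <->
     c = - 421 / 144)
  /\ (has_3cycle_with_num c [:: 19; -19] <->
     c = - 301 / 144 \/ c = - (337 * 673) / 360 ^+ 2)
  /\ (has_3cycle_with_num c [:: 23; -23] <->
     c = - 301 / 144 \/ c = - 43 ^+ 2 / 24 ^+ 2).
Proof.
  split; [|split]; split.
  - case/cycle_table=> // k /[swap].
    by case=> [[_ ->]|[[_ ->]|[[-> _]|[[-> _]|[[-> _]|[[-> _]|[_ ->]]]]]]].
  - move->; apply: (@cycle_witness _ (-11/12) (-25/12) (17/12));
      [by rewrite /fc; field..|by []|by []|by []].
  - case/cycle_table=> // k /[swap].
    by case=> [[-> _]|[[-> _]|[[_ ->]|[[_ ->]|[[-> _]|[[-> _]|[-> _]]]]]]] // _; [left|right].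
  - case=> ->.
    + apply: (@cycle_witness _ (19/12) (5/12) (-23/12));
        [by rewrite /fc; field..|by []|by []|by []].
    + apply: (@cycle_witness _ (-19/360) (-629/360) (469/360));
        [by rewrite /fc; field..|by []|by []|by []].
  - case/cycle_table=> // k /[swap].
    by case=> [[-> _]|[[-> _]|[[-> _]|[[-> _]|[[_ ->]|[[_ ->]|[-> _]]]]]]] // _; [right|left].
  - case=> ->.
    + apply: (@cycle_witness _ (-23/12) (19/12) (5/12));
        [by rewrite /fc; field..|by []|by []|by []].
    + apply: (@cycle_witness _ (23/24) (-55/24) (49/24));
        [by rewrite /fc; field..|by []|by []|by []].
Qed.
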